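(* Let $T$ be a tree and $x\in\mathsf L_T$. Let $S\subset T$ be the subgraph with vertices those $\alpha\in V(T)$ with $x\in\mathsf L_T(\alpha)$, and edges those $\{\alpha,\beta\}\in E(T)$ with both $\alpha,\beta$ such vertices. Then $S$ is a tree.
   Context: A tree is a nonempty finite connected acyclic graph with vertex set $V(T)$ and edge set $E(T)$ (two-element subsets of $V(T)$). Arboreal singularity: for $\alpha\in V(T)$ let $\mathsf L_T(\alpha)=\mathbb R^{V(T)\setminus\{\alpha\}}$ with coordinates $x_\gamma(\alpha)$; $\mathsf L_T$ is the quotient of $\coprod_\alpha\mathsf L_T(\alpha)$ by the equivalence relation generated by identifying, for each edge $\{\alpha,\beta\}$, $\{x_\gamma(\alpha)\}\sim\{x_\gamma(\beta)\}$ whenever $x_\beta(\alpha)=x_\alpha(\beta)\ge0$ and $x_\gamma(\alpha)=x_\gamma(\beta)$ for $\gamma\ne\alpha,\beta$; each $\mathsf L_T(\alpha)$ is regarded as a subspace of $\mathsf L_T$. *)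

From mathcomp Require Import all_boot.
From Stdlib Require Import Reals Relations.
Set Implicit Arguments. Unset Strict Implicit. Unset Printing Implicit Defensive.

(* A simple graph on a finite vertex type V: edges {a,b} are encoded by a
   symmetric irreflexive boolean relation e. *)
Definition simple_graph (V : finType) (e : rel V) : Prop :=
  (forall a, ~~ e a a) /\ (forall a b, e a b = e b a).

Definition induced (V : finType) (e : rel V) (A : V -> Prop) : relation V :=
  fun a b => e a b /\ A a /\ A b.

Definition has_cycle_on (V : finType) (e : rel V) (A : V -> Prop) : Prop :=
  exists (c : seq V) (x0 : V), (3 <= size c)%N /\ uniq c /\
    forall i, (i < size c)%N ->
      induced e A (nth x0 c i) (nth x0 c ((i.+1) %% size c)).

Definition tree_on (V : finType) (e : rel V) (A : V -> Prop) : Prop :=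
  (exists a, A a) /\
  (forall a b, A a -> A b -> clos_refl_trans V (induced e A) a b) /\
  ~ has_cycle_on e A.

Definition is_tree (V : finType) (e : rel V) : Prop :=
  simple_graph e /\ tree_on e (fun _ => True).

(* Arboreal singularity L_T.  A point of L_T(alpha) = R^{V \ {alpha}} is
   represented by a pair (alpha, f) with f : V -> R and the irrelevant
   coordinate normalised to f alpha = 0. *)
Definition apt (V : finType) : Type := (V * (V -> R))%type.

Definition wf_apt (V : finType) (p : apt V) : Prop := p.2 p.1 = 0%R.

(* Generating identification along an edge {alpha,beta}:
   x_beta(alpha) = x_alpha(beta) >= 0 and x_gamma(alpha) = x_gamma(beta)
   for gamma <> alpha, beta. *)
Definition arb_step (V : finType) (e : rel V) (p q : apt V) : Prop :=
  wf_apt p /\ wf_apt q /\ e p.1 q.1 /\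
  p.2 q.1 = q.2 p.1 /\ (0 <= p.2 q.1)%R /\
  (forall g, g != p.1 -> g != q.1 -> p.2 g = q.2 g).

Definition arb_equiv (V : finType) (e : rel V) : relation (apt V) :=
  fun p q => p = q \/ clos_refl_sym_trans (apt V) (arb_step e) p q.

Definition in_chart (V : finType) (e : rel V) (p : apt V) (a : V) : Prop :=
  exists f : V -> R, wf_apt (a, f) /\ arb_equiv e p (a, f).

(* Every generating identification of L_T relates charts L_T(alpha) and
   L_T(beta) along an edge {alpha, beta} of T, and relates points lying in
   both charts.  Hence a chain of identifications from a representative of x
   to a representative in L_T(alpha) is a walk from the base chart to alpha
   inside S, so S is connected; it is acyclic because T is. *)
From mathcomp Require Import all_boot.
From Stdlib Require Import Reals Relations.

Set Implicit Arguments.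
Unset Strict Implicit.

Lemma clos_rt_sym (A : Type) (R : relation A) :
  symmetric A R -> symmetric A (clos_refl_trans A R).
Proof.
move=> R_sym a b; elim=> [x y /R_sym Ryx|x|x y z _ IHxy _ IHyz].
- exact: rt_step.
- exact: rt_refl.
- exact: rt_trans IHyz IHxy.
Qed.

Section InducedSubgraph.

Variables (V : finType) (e : rel V).

Lemma induced_sym (A : V -> Prop) :
  (forall a b, e a b = e b a) -> symmetric V (induced e A).
Proof. by move=> e_sym a b [eab [Aa Ab]]; rewrite /induced e_sym. Qed.

Lemma has_cycle_on_sub (A B : V -> Prop) :
  (forall a, A a -> B a) -> has_cycle_on e A -> has_cycle_on e B.
Proof.
move=> AB [c [x0 [size_c [uniq_c cycle_c]]]]; exists c, x0; do 2!split=> //.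
by move=> i /cycle_c [eci [Aci Aci1]]; do 2!split=> //; apply: AB.
Qed.

End InducedSubgraph.

Section Charts.

Variables (V : finType) (e : rel V).
Hypothesis e_sym : forall a b, e a b = e b a.

Notation arb_rst := (clos_refl_sym_trans (apt V) (arb_step e)).

Lemma arb_equivE (p q : apt V) : arb_equiv e p q <-> arb_rst p q.
Proof. by split=> [[->|//]|]; [apply: rst_refl | right]. Qed.

Lemma in_chart_of_rst (p q : apt V) :
  arb_rst p q -> wf_apt q -> in_chart e p q.1.
Proof. by case: q => a f pq wq; exists f; split=> //; apply/arb_equivE. Qed.

Lemma in_chart_base (p : apt V) : wf_apt p -> in_chart e p p.1.
Proof. by move=> wp; apply: in_chart_of_rst wp; apply: rst_refl. Qed.

Lemma chart_walk_of_rst (p q : apt V) :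
  arb_rst p q -> clos_refl_trans V (induced e (in_chart e p)) p.1 q.1.
Proof.
move=> pq; elim: {pq}(clos_rst_rstn1 _ _ _ _ pq) => [|y z step py1 walk_y].
  exact: rt_refl.
apply: rt_trans walk_y (rt_step _ _ _ _ _).
have pz : arb_rst p z by exact/clos_rstn1_rst/(rstn1_trans _ _ _ _ _ step py1).
have py : arb_rst p y by exact: clos_rstn1_rst.
have [wy wz eyz] : [/\ wf_apt y, wf_apt z & e y.1 z.1].
  by case: step => [[? [? [? _]]] | [? [? [ezy _]]]]; split=> //; rewrite e_sym.
split=> //; split; [exact: in_chart_of_rst py wy | exact: in_chart_of_rst pz wz].
Qed.

Lemma chart_walk (p : apt V) (a : V) :
  in_chart e p a -> clos_refl_trans V (induced e (in_chart e p)) p.1 a.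
Proof. by move=> [f [_ /arb_equivE pf]]; exact: chart_walk_of_rst pf. Qed.

End Charts.

Theorem lemma2p10 (V : finType) (e : rel V) (p : apt V) :
  is_tree e -> wf_apt p -> tree_on e (in_chart e p).
Proof.
move=> [[_ e_sym] [_ [_ T_acyclic]]] wp.
split; first by exists p.1; apply: in_chart_base.
split; last by move/(has_cycle_on_sub (B := fun _ => True)) => cyc; apply/T_acyclic/cyc.
move=> a b pa pb; apply: rt_trans (chart_walk e_sym pb).
exact/clos_rt_sym/(chart_walk e_sym pa)/induced_sym.
Qed.
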